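(* Let $G$ be a profinite group and $\rho\colon G\to\mathbf{GL}_n(\overline{\mathbf{Q}}_{\ell})$ a continuous representation. Suppose there is an open subgroup $H$ of $G$ such that $\rho(H)\subset\mathbf{GL}_n(\mathbf{Z}_{\ell})$ and $\rho(H)$ contains an open subgroup of $\mathbf{GL}_n(\mathbf{Z}_{\ell})$. Suppose also that there is a dense set of elements $\{g_i\}_{i\in I}$ of $G$ such that $\operatorname{tr}\rho(g_i)\in\mathbf{Q}_{\ell}$ for all $i\in I$. Then $\rho(G)\subset\mathbf{GL}_n(\mathbf{Q}_{\ell})$. *)

From HB Require Import structures.
From mathcomp Require Import all_boot all_order all_algebra.
From mathcomp Require Import all_classical all_reals.
From mathcomp Require Import topology.
Set Implicit Arguments. Unset Strict Implicit. Unset Printing Implicit Defensive.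
Import Order.TTheory GRing.Theory Num.Theory.
Local Open Scope classical_set_scope.
Local Open Scope ring_scope.

Definition is_group (G : Type) (mul : G -> G -> G) (inv : G -> G) (one : G) :=
  [/\ forall x y z, mul x (mul y z) = mul (mul x y) z,
      forall x, mul one x = x /\ mul x one = x &
      forall x, mul (inv x) x = one /\ mul x (inv x) = one].

Definition is_profinite_group (G : topologicalType)
    (mul : G -> G -> G) (inv : G -> G) (one : G) :=
  [/\ is_group mul inv one,
      continuous (fun p : G * G => mul p.1 p.2),
      continuous inv,
      compact [set: G] /\ hausdorff_space G &
      totally_disconnected [set: G]].

Definition is_subgroup (G : Type) (mul : G -> G -> G) (inv : G -> G) (one : G)
    (H : set G) :=
  [/\ H one, forall x y, H x -> H y -> H (mul x y) & forall x, H x -> H (inv x)].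

(* (L, absv) is a model of Qbar_l with its l-adic absolute value:
   L is algebraically closed, absv a nonarchimedean absolute value on L
   with absv l = 1/l (hence its restriction to Q is the normalized l-adic
   absolute value, by Ostrowski), the topological closure K of Q in L
   (which plays the role of Q_l, see in_Ql) is complete, and L is algebraic
   over K.  These properties characterize (Qbar_l, |.|_l) up to isometric
   isomorphism, with K corresponding to Q_l. *)
Definition in_Ql (R : realType) (L : closedFieldType) (absv : L -> R) (x : L) :=
  forall e : R, 0 < e -> exists q : rat, absv (x - ratr q) < e.

Definition in_Zl (R : realType) (L : closedFieldType) (absv : L -> R) (x : L) :=
  in_Ql absv x /\ absv x <= 1.

Definition is_Qlbar (l : nat) (R : realType) (L : closedFieldType) (absv : L -> R) :=
  [/\ prime l /\ absv (l%:R) = (l%:R)^-1,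
      (forall x, 0 <= absv x) /\ (forall x, absv x = 0 <-> x = 0),
      (forall x y, absv (x * y) = absv x * absv y)
        /\ (forall x y, absv (x + y) <= Num.max (absv x) (absv y)),
      (forall u : nat -> L, (forall k, in_Ql absv (u k)) ->
         (forall e : R, 0 < e -> exists N, forall m k, (N <= m)%N -> (N <= k)%N ->
              absv (u m - u k) < e) ->
         exists x : L, forall e : R, 0 < e -> exists N, forall k, (N <= k)%N ->
              absv (u k - x) < e) &
      (forall x : L, exists p : {poly L},
         [/\ p != 0, forall i, in_Ql absv p`_i & root p x])].

Definition mx_in (L : closedFieldType) (P : L -> Prop) (n : nat) (M : 'M[L]_n) :=
  forall i j, P (M i j).

Definition in_GLn_Zl (R : realType) (L : closedFieldType) (absv : L -> R)
    (n : nat) (M : 'M[L]_n) :=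
  [/\ mx_in (in_Zl absv) M, M \in unitmx & mx_in (in_Zl absv) (invmx M)].

Definition open_subgroup_GLn_Zl (R : realType) (L : closedFieldType)
    (absv : L -> R) (n : nat) (U : set 'M[L]_n) :=
  [/\ (forall M, U M -> in_GLn_Zl absv M),
      U 1%:M,
      (forall M N, U M -> U N -> U (M *m N)),
      (forall M, U M -> U (invmx M)) &
      (forall M, U M -> exists2 e : R, 0 < e & forall N, in_GLn_Zl absv N ->
          (forall i j, absv (N i j - M i j) < e) -> U N)].

Definition is_cont_rep (G : topologicalType) (mul : G -> G -> G) (one : G)
    (R : realType) (L : closedFieldType) (absv : L -> R) (n : nat)
    (rho : G -> 'M[L]_n) :=
  [/\ forall g, rho g \in unitmx,
      forall g h, rho (mul g h) = rho g *m rho h,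
      rho one = 1%:M &
      forall g i j (e : R), 0 < e -> exists2 U, nbhs g U &
          forall h, U h -> absv (rho h i j - rho g i j) < e].

From HB Require Import structures.
From mathcomp Require Import all_boot all_order all_algebra.
From mathcomp Require Import all_classical all_reals.
From mathcomp Require Import topology.
From mathcomp Require Import ring lra.
Set Implicit Arguments. Unset Strict Implicit. Unset Printing Implicit Defensive.
Import Order.TTheory GRing.Theory Num.Theory.
Local Open Scope classical_set_scope.
Local Open Scope ring_scope.

(* Continuity of rho and density of the g_i put tr rho(g) in the closed set Q_l
   for every g.  The open subgroup of GL_n(Z_l) inside rho(H) contains a
   transvection 1 + m E_ji with m a positive integer (a high power of l), say
   rho(h); then tr rho(gh) - tr rho(g) = m rho(g)_ij, so every entry of rho(g)
   lies in Q_l. *)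

Definition ultrametric_absv (R : realDomainType) (F : fieldType) (absv : F -> R) :=
  [/\ forall x, 0 <= absv x, forall x, absv x = 0 <-> x = 0,
      forall x y, absv (x * y) = absv x * absv y &
      forall x y, absv (x + y) <= Num.max (absv x) (absv y)].

Section Ultrametric.

Variables (R : realDomainType) (F : fieldType) (absv : F -> R).
Hypothesis absvP : ultrametric_absv absv.

Lemma absv_ge0 x : 0 <= absv x. Proof. by case: absvP. Qed.

Lemma absv_eq0 x : absv x = 0 <-> x = 0. Proof. by case: absvP. Qed.

Lemma absvM x y : absv (x * y) = absv x * absv y. Proof. by case: absvP. Qed.

Lemma absvD_le_max x y : absv (x + y) <= Num.max (absv x) (absv y).
Proof. by case: absvP. Qed.

Lemma absv0 : absv 0 = 0. Proof. exact/absv_eq0. Qed.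

Lemma absv1 : absv 1 = 1.
Proof.
have absv1_neq0 : absv 1 != 0 by apply/eqP => /absv_eq0/eqP; rewrite oner_eq0.
by apply: (mulfI absv1_neq0); rewrite -absvM !mulr1.
Qed.

Lemma absvN x : absv (- x) = absv x.
Proof.
have absvN1 : absv (-1) = 1.
  have := absv_ge0 (-1); have : absv (-1) * absv (-1) = 1.
    by rewrite -absvM mulrNN mulr1 absv1.
  nra.
by rewrite -mulN1r absvM absvN1 mul1r.
Qed.

Lemma absvX x k : absv (x ^+ k) = absv x ^+ k.
Proof. by elim: k => [|k IHk]; rewrite ?absv1 // !exprS absvM IHk. Qed.

Lemma absvD_lt e x y : absv x < e -> absv y < e -> absv (x + y) < e.
Proof. by move=> ltxe ltye; rewrite (le_lt_trans (absvD_le_max x y)) // gt_max ltxe. Qed.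

Lemma absvB_lt e x y : absv x < e -> absv y < e -> absv (x - y) < e.
Proof. by move=> ltxe ltye; rewrite absvD_lt // absvN. Qed.

Lemma absv_sum_lt (I : Type) (r : seq I) (P : pred I) (f : I -> F) e :
  0 < e -> (forall i, P i -> absv (f i) < e) -> absv (\sum_(i <- r | P i) f i) < e.
Proof.
move=> e_gt0 ltfe; apply: (big_ind (fun x => absv x < e)) => //.
  by rewrite absv0.
exact: absvD_lt.
Qed.

Lemma absv_natr_le1 k : absv k%:R <= 1.
Proof.
elim: k => [|k IHk]; first by rewrite absv0.
by rewrite -addn1 natrD (le_trans (absvD_le_max _ _)) // ge_max IHk absv1 /=.
Qed.

Lemma absv_1D x : absv x < 1 -> absv (1 + x) = 1.
Proof.
move=> ltx1; apply/le_anti/andP; split.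
  by rewrite (le_trans (absvD_le_max _ _)) // ge_max absv1 lexx ltW.
rewrite leNgt; apply/negP => lt1x1.
by have := absvB_lt lt1x1 ltx1; rewrite addrK absv1 ltxx.
Qed.

(* If p = char F were positive, then l would be a unit mod p, i.e. 1 = - a l in F
   for some natural a, and the absolute values would give 1 <= |l| < 1. *)
Lemma ultrametric_pchar0 l : 0 < absv l%:R < 1 -> [pchar F] =i pred0.
Proof.
case/andP=> absvl_gt0 absvl_lt1 p; rewrite inE; apply/negP => charFp.
have p_prime := GRing.pcharf_prime charFp.
have p_coprime_l : coprime p l.
  rewrite prime_coprime // (GRing.dvdn_pcharf charFp).
  by apply/eqP => /absv_eq0 absvl0; rewrite absvl0 ltxx in absvl_gt0.
have [a _] := Bezoutl l (prime_gt0 p_prime).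
rewrite (eqP p_coprime_l) (GRing.dvdn_pcharf charFp) natrD natrM addr_eq0.
move=> /eqP/(congr1 absv); rewrite absvN absv1 absvM => absv1E.
have := absv_natr_le1 a; have := absv_ge0 a%:R; nra.
Qed.

End Ultrametric.

Lemma ratr0 (F : unitRingType) : ratr 0 = 0 :> F. Proof. exact: ratr_nat F 0. Qed.

Lemma ratr1 (F : unitRingType) : ratr 1 = 1 :> F. Proof. exact: ratr_nat F 1. Qed.

(* MathComp makes [ratr] a ring morphism only into a numFieldType; over a field of
   characteristic 0 the rules needed here are proved directly. *)
Section RatrPchar0.

Variable F : fieldType.
Hypothesis F_pchar0 : [pchar F] =i pred0.

Lemma intr_denq_neq0 (x : rat) : (denq x)%:~R != 0 :> F.
Proof.
have := denq_gt0 x; case: (denq x) => // d; rewrite ltz_nat => d_gt0.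
by rewrite -pmulrn (pcharf0P _).1 // -lt0n.
Qed.

Lemma ratr_mulz (x : rat) (a b : int) :
  x * b%:~R = a%:~R -> ratr x * b%:~R = a%:~R :> F.
Proof.
move=> xbE; have numqbE : numq x * b = a * denq x.
  by apply: (@intr_inj rat); rewrite !rmorphM /= numqE -xbE mulrAC.
rewrite /ratr mulrAC -rmorphM /= numqbE rmorphM /= mulfK //.
exact: intr_denq_neq0.
Qed.

Lemma ratrB (x y : rat) : ratr (x - y) = ratr x - ratr y :> F.
Proof.
have dxy_neq0 : (denq x * denq y)%:~R != 0 :> F.
  by rewrite rmorphM mulf_neq0 // intr_denq_neq0.
apply: (mulIf dxy_neq0).
rewrite (@ratr_mulz _ (numq x * denq y - numq y * denq x)); last first.
  by rewrite !(rmorphM, rmorphB) /= !numqE; ring.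
rewrite rmorphB !rmorphM /= -(ratr_mulz (esym (numqE x))).
rewrite -(ratr_mulz (esym (numqE y))); ring.
Qed.

Lemma ratrM (x y : rat) : ratr (x * y) = ratr x * ratr y :> F.
Proof.
have dxy_neq0 : (denq x * denq y)%:~R != 0 :> F.
  by rewrite rmorphM mulf_neq0 // intr_denq_neq0.
apply: (mulIf dxy_neq0).
rewrite (@ratr_mulz _ (numq x * numq y)); last first.
  by rewrite !rmorphM /= !numqE; ring.
rewrite !rmorphM /= -(ratr_mulz (esym (numqE x))) -(ratr_mulz (esym (numqE y))).
ring.
Qed.

Lemma ratrN (x : rat) : ratr (- x) = - ratr x :> F.
Proof. by rewrite -sub0r ratrB ratr0 sub0r. Qed.

Lemma ratrD (x y : rat) : ratr (x + y) = ratr x + ratr y :> F.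
Proof. by rewrite -{1}[y]opprK ratrB ratrN opprK. Qed.

End RatrPchar0.

Section Transvection.

Variables (R : comPzRingType) (n : nat) (i j : 'I_n).

Lemma mxtrace_mul_delta (A : 'M[R]_n) : \tr (A *m delta_mx j i) = A i j.
Proof.
rewrite /mxtrace (bigD1 i) //= big1 ?addr0 => [|k neq_ki].
  rewrite mxE (bigD1 j) //= big1 ?addr0 => [|k neq_kj]; first by rewrite mxE !eqxx mulr1.
  by rewrite mxE (negbTE neq_kj) mulr0.
by rewrite mxE big1 // => k' _; rewrite mxE (negbTE neq_ki) andbF mulr0.
Qed.

Lemma mul_transvection (a b : R) :
  (1%:M + a *: delta_mx j i) *m (1%:M + b *: delta_mx j i)
    = 1%:M + (a + b + a * b * (i == j)%:R) *: delta_mx j i.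
Proof.
rewrite mulmxDl !mulmxDr !mulmx1 !mul1mx -!scalemxAl -!scalemxAr.
rewrite mul_delta_mx_cond scalerA -scaler_nat scalerA.
by rewrite !scalerDl -addrA; congr (_ + _); rewrite addrCA addrA.
Qed.

End Transvection.

Definition absv_continuous (T : topologicalType) (R : realDomainType) (F : fieldType)
    (absv : F -> R) (f : T -> F) :=
  forall t e, 0 < e -> \forall s \near t, absv (f s - f t) < e.

Lemma absv_continuous_sum (T : topologicalType) (R : realDomainType) (F : fieldType)
    (absv : F -> R) (I : finType) (f : I -> T -> F) :
  ultrametric_absv absv -> (forall i, absv_continuous absv (f i)) ->
  absv_continuous absv (fun t => \sum_i f i t).
Proof.
move=> absvP f_cont t e e_gt0.
have := filter_forall (nbhs_filter t) (fun i => f_cont i t e e_gt0).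
by apply: filterS => s near_fs; rewrite -sumrB (absv_sum_lt absvP).
Qed.

Lemma Qlbar_ultrametric l (R : realType) (L : closedFieldType) (absv : L -> R) :
  is_Qlbar l absv -> ultrametric_absv absv.
Proof. by case=> _ [? ?] [? ?]. Qed.

Lemma Qlbar_pchar0 l (R : realType) (L : closedFieldType) (absv : L -> R) :
  is_Qlbar l absv -> [pchar L] =i pred0.
Proof.
move=> hL; have [[l_prime absvl] _ _ _ _] := hL.
apply: (ultrametric_pchar0 (Qlbar_ultrametric hL) (l := l)).
by rewrite absvl invr_gt0 invf_lt1 ?ltr0n ?ltr1n ?prime_gt0 ?prime_gt1.
Qed.

Section Ql.

Variables (l : nat) (R : realType) (L : closedFieldType) (absv : L -> R).
Hypothesis hL : is_Qlbar l absv.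

Let absvP := Qlbar_ultrametric hL.
Let L_pchar0 := Qlbar_pchar0 hL.

Lemma in_Ql_ratr q : in_Ql absv (ratr q).
Proof. by move=> e e_gt0; exists q; rewrite subrr (absv0 absvP). Qed.

Lemma in_Ql_closed x :
  (forall e, 0 < e -> exists2 y, in_Ql absv y & absv (x - y) < e) -> in_Ql absv x.
Proof.
move=> near_x e e_gt0; have [y Qly absvxy] := near_x e e_gt0.
have [q absvyq] := Qly e e_gt0; exists q.
by rewrite -(subrK y x) -addrA (absvD_lt absvP).
Qed.

Lemma in_QlB x y : in_Ql absv x -> in_Ql absv y -> in_Ql absv (x - y).
Proof.
move=> Qlx Qly e e_gt0; have [q absvxq] := Qlx e e_gt0; have [r absvyr] := Qly e e_gt0.
exists (q - r); rewrite ratrB //.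
have -> : x - y - (ratr q - ratr r) = (x - ratr q) - (y - ratr r) by ring.
exact: absvB_lt.
Qed.

Lemma in_QlMr x q : in_Ql absv x -> in_Ql absv (x * ratr q).
Proof.
move=> Qlx; have [/(absv_eq0 absvP) q0 | absvq_neq0] := eqVneq (absv (ratr q : L)) 0.
  by rewrite q0 mulr0 -(ratr0 L); apply: in_Ql_ratr.
have absvq_gt0 : 0 < absv (ratr q : L) by rewrite lt_def absvq_neq0 (absv_ge0 absvP).
move=> e e_gt0; have [r absvxr] := Qlx (e / absv (ratr q : L)) (divr_gt0 e_gt0 absvq_gt0).
by exists (r * q); rewrite ratrM // -mulrBl (absvM absvP) -ltr_pdivlMr.
Qed.

Lemma in_Zl_ratr q : absv (ratr q : L) <= 1 -> in_Zl absv (ratr q).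
Proof. by split; first exact: in_Ql_ratr. Qed.

Lemma in_Ql_dense_continuous (T : topologicalType) (f : T -> L) (I : Type) (gs : I -> T) :
  absv_continuous absv f -> dense (range gs) -> (forall i, in_Ql absv (f (gs i))) ->
  forall t, in_Ql absv (f t).
Proof.
move=> f_cont gs_dense Qlf t; apply: in_Ql_closed => e e_gt0.
have : nbhs t (fun s => absv (f s - f t) < e) := f_cont t e e_gt0.
rewrite nbhsE => -[B [B_open Bt] B_near].
have [s [Bs [i _ gsi]]] := gs_dense B (ex_intro _ t Bt) B_open.
by exists (f (gs i)); rewrite // -(absvN absvP) opprB gsi B_near.
Qed.

Lemma exists_natr_absv_lt e : 0 < e -> exists2 m : nat, (0 < m)%N & absv m%:R < e.
Proof.
move=> e_gt0; have [[l_prime absvl] _ _ _ _] := hL.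
have l_gt1 := prime_gt1 l_prime.
pose k := Num.bound e^-1; exists (l ^ k)%N; first by rewrite expn_gt0 ltnW.
have lk_gt0 : (0 : R) < (l ^ k)%:R by rewrite ltr0n expn_gt0 ltnW.
rewrite natrX (absvX absvP) absvl exprVn -natrX invf_plt ?posrE //.
rewrite (lt_trans (archi_boundP _)) ?invr_ge0 ?ltW // ltr_nat.
exact: ltn_expl.
Qed.

Lemma in_Zl_transvection n (i j : 'I_n) q :
  absv (ratr q : L) <= 1 -> mx_in (in_Zl absv) (1%:M + ratr q *: delta_mx j i).
Proof.
move=> absvq_le1 u v; rewrite !mxE; set b := (u == j) && (v == i).
have ratrE : ratr ((u == v)%:R + q * b%:R) = (u == v)%:R + ratr q * b%:R :> L.
  by rewrite ratrD // ratrM // !ratr_nat.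
rewrite -ratrE; apply: in_Zl_ratr; rewrite ratrE.
rewrite (le_trans (absvD_le_max absvP _ _)) // ge_max (absv_natr_le1 absvP) /=.
by rewrite (absvM absvP) mulr_ile1 ?(absv_ge0 absvP) ?(absv_natr_le1 absvP).
Qed.

(* The inverse of [1 + q E_ji] is [1 + d E_ji] with [d = -q / (1 + q [i == j])],
   and [|1 + q [i == j]| = 1] gives [|d| = |q|]. *)
Lemma transvection_in_GLn_Zl n (i j : 'I_n) q :
  absv (ratr q : L) < 1 -> in_GLn_Zl absv (1%:M + ratr q *: delta_mx j i).
Proof.
move=> absvq_lt1; pose s : rat := 1 + q * (i == j)%:R.
have absvs : absv (ratr s : L) = 1.
  rewrite /s ratrD // ratrM // ratr1 ratr_nat; case: (i == j).
    by rewrite mulr1 (absv_1D absvP).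
  by rewrite mulr0 addr0 (absv1 absvP).
have s_neq0 : s != 0.
  by apply: contra_eq_neq absvs => ->; rewrite ratr0 (absv0 absvP) eq_sym oner_neq0.
pose d : rat := - q / s.
have dsE : d * s = - q by rewrite divfK.
have absvd : absv (ratr d : L) = absv (ratr q : L).
  have := congr1 (fun x => absv (ratr x : L)) dsE.
  by rewrite /= ratrM // (absvM absvP) absvs mulr1 ratrN // (absvN absvP).
have inv_transvection :
    (1%:M + ratr q *: delta_mx j i) *m (1%:M + ratr d *: delta_mx j i) = 1%:M :> 'M[L]_n.
  rewrite mul_transvection -[_%:R]ratr_nat -!ratrM // -!ratrD //.
  have -> : q + d + q * d * (i == j)%:R = q + d * s by rewrite /s; ring.
  by rewrite dsE subrr ratr0 scale0r addr0.
have [unit_transvection _] := mulmx1_unit inv_transvection.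
have invE : invmx (1%:M + ratr q *: delta_mx j i) = 1%:M + ratr d *: delta_mx j i :> 'M[L]_n.
  by rewrite -[RHS](mulKmx unit_transvection) inv_transvection mulmx1.
split=> //; first exact/in_Zl_transvection/ltW.
by rewrite invE; apply: in_Zl_transvection; rewrite absvd ltW.
Qed.

Lemma open_subgroup_GLn_Zl_transvection n (U : set 'M[L]_n) (i j : 'I_n) :
  open_subgroup_GLn_Zl absv U ->
  exists2 m : nat, (0 < m)%N & U (1%:M + (m%:R : L) *: delta_mx j i).
Proof.
case=> _ U1 _ _ /(_ _ U1) [e e_gt0 U_near1].
have [m m_gt0] : exists2 m : nat, (0 < m)%N & absv (m%:R : L) < Num.min e 1.
  by apply: exists_natr_absv_lt; rewrite lt_min e_gt0 ltr01.
rewrite lt_min => /andP[absvm_lt_e absvm_lt1]; exists m => //.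
apply: U_near1 => [|u v].
  by rewrite -(ratr_nat L m); apply: transvection_in_GLn_Zl; rewrite ratr_nat.
rewrite [X in X - _]mxE addrAC subrr add0r !mxE.
by case: (_ && _); rewrite ?mulr1 // mulr0 (absv0 absvP).
Qed.

End Ql.

Theorem lemma3p2 (l : nat) (R : realType) (L : closedFieldType) (absv : L -> R)
  (hL : is_Qlbar l absv)
  (G : topologicalType) (mul : G -> G -> G) (inv : G -> G) (one : G)
  (hG : is_profinite_group mul inv one)
  (n : nat) (rho : G -> 'M[L]_n) (hrho : is_cont_rep mul one absv rho)
  (H : set G) (hHsub : is_subgroup mul inv one H) (hHopen : open H)
  (hHZl : forall h, H h -> in_GLn_Zl absv (rho h))
  (hHopen_img : exists U : set 'M[L]_n,
      open_subgroup_GLn_Zl absv U /\ (forall M, U M -> exists2 h, H h & rho h = M))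
  (I : Type) (gs : I -> G) (hdense : dense (range gs))
  (htr : forall i, in_Ql absv (\tr (rho (gs i)))) :
  forall g, mx_in (in_Ql absv) (rho g).
Proof.
have [_ rhoM _ rho_cont] := hrho.
have Ql_tr : forall g, in_Ql absv (\tr (rho g)).
  apply: (in_Ql_dense_continuous hL _ hdense htr).
  apply: (@absv_continuous_sum _ _ _ _ _ (fun k g' => rho g' k k) (Qlbar_ultrametric hL)).
  move=> k g' e e_gt0.
  by have [V V_nbhs V_cont] := rho_cont g' k k e e_gt0; apply: filterS V_nbhs.
move=> g i j; have [U [U_open U_img]] := hHopen_img.
have [m m_gt0 /U_img [h _ rhohE]] := open_subgroup_GLn_Zl_transvection hL i j U_open.
have trE : \tr (rho (mul g h)) - \tr (rho g) = m%:R * rho g i j.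
  rewrite rhoM rhohE mulmxDr mulmx1 mxtraceD -scalemxAr mxtraceZ mxtrace_mul_delta.
  by rewrite addrC addKr.
have -> : rho g i j = (\tr (rho (mul g h)) - \tr (rho g)) * ratr (m%:R^-1).
  have m_neq0 : (m%:R : rat) != 0 by rewrite pnatr_eq0 -lt0n.
  by rewrite trE mulrAC -(ratr_nat L m) -(ratrM (Qlbar_pchar0 hL)) mulfV // ratr1 mul1r.
by apply/(in_QlMr hL)/(in_QlB hL).
Qed.
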